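(* Let $\mathcal H$ be a Hilbert space, $A$ a bounded, everywhere defined, symmetric operator on $\mathcal H$, and $P$ a self-adjoint operator on $\mathcal H$. Suppose that $D(PA)=D(P)$ (where $D(PA)=\{x\in\mathcal H: Ax\in D(P)\}$) and that there is a bounded operator $B$ on $\mathcal H$ with $BD(P)\subset D(P)$ such that $PAf-APf=Bf$ for every $f\in D(P)$. Then $AP$ is closed and $APA$ is self-adjoint.
   Context: Products of operators carry their natural domains; $D(AP)=D(P)$ and $D(APA)=D(PA)$. *)

(* complex Hilbert spaces over C := R[i] with R : realType,
   and (possibly unbounded) operators given by a domain predicate and a map. *)
From HB Require Import structures.
From mathcomp Require Import all_boot all_order all_algebra.
From mathcomp Require Import complex.
From mathcomp Require Import reals.
Set Implicit Arguments. Unset Strict Implicit. Unset Printing Implicit Defensive.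
Import Order.TTheory GRing.Theory Num.Theory.
Local Open Scope ring_scope.

Section Hilbert.
Variables (R : realType) (H : lmodType R[i]).

Definition inner_product_axioms (inner : H -> H -> R[i]) : Prop :=
  [/\ (forall x y z, inner (x + y) z = inner x z + inner y z),
      (forall (a : R[i]) x y, inner (a *: x) y = a * inner x y),
      (forall x y, inner y x = conjc (inner x y)),
      (forall x, 0 <= complex.Re (inner x x) /\ complex.Im (inner x x) = 0)
    & (forall x, inner x x = 0 -> x = 0)].

Definition hnorm (inner : H -> H -> R[i]) (x : H) : R :=
  Num.sqrt (complex.Re (inner x x)).

Definition hconverges (inner : H -> H -> R[i]) (u : nat -> H) (l : H) : Prop :=
  forall eps : R, 0 < eps ->
    exists N : nat, forall n : nat, (N <= n)%N -> hnorm inner (u n - l) < eps.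

Definition hcauchy (inner : H -> H -> R[i]) (u : nat -> H) : Prop :=
  forall eps : R, 0 < eps ->
    exists N : nat, forall m n : nat, (N <= m)%N -> (N <= n)%N ->
      hnorm inner (u m - u n) < eps.

Definition is_hilbert_space (inner : H -> H -> R[i]) : Prop :=
  inner_product_axioms inner /\
  forall u : nat -> H, hcauchy inner u -> exists l : H, hconverges inner u l.

Definition dense (inner : H -> H -> R[i]) (D : H -> Prop) : Prop :=
  forall x (eps : R), 0 < eps -> exists y, D y /\ hnorm inner (x - y) < eps.

Definition bounded_op (inner : H -> H -> R[i]) (A : H -> H) : Prop :=
  linear_for *:%R A /\
  exists M : R, forall x, hnorm inner (A x) <= M * hnorm inner x.

Definition symmetric_op (inner : H -> H -> R[i]) (A : H -> H) : Prop :=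
  forall x y, inner (A x) y = inner x (A y).

Definition adjoint_graph (inner : H -> H -> R[i]) (D : H -> Prop) (T : H -> H)
    (y z : H) : Prop :=
  forall x, D x -> inner (T x) y = inner x z.

Definition self_adjoint (inner : H -> H -> R[i]) (D : H -> Prop) (T : H -> H) : Prop :=
  dense inner D /\
  forall y z, adjoint_graph inner D T y z <-> (D y /\ z = T y).

Definition closed_op (inner : H -> H -> R[i]) (D : H -> Prop) (T : H -> H) : Prop :=
  forall (u : nat -> H) (x y : H),
    (forall n, D (u n)) -> hconverges inner u x -> hconverges inner (fun n => T (u n)) y ->
    D x /\ T x = y.

End Hilbert.

(* Natural domains of products of operators: D(AP) = D(P), D(PA) = {x | A x \in D(P)},
   D(APA) = D(PA). *)
Definition dom_comp_left {H : Type} (DP : H -> Prop) : H -> Prop := DP.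
Definition dom_comp_right {H : Type} (DP : H -> Prop) (A : H -> H) : H -> Prop :=
  fun x => DP (A x).

(* The commutator B = PA - AP is skew-symmetric on D(P): <Bx, w> = -<x, Bw>,
   and since B is bounded and D(P) is dense this holds for every w.
   Closedness of AP: if u_n -> x with u_n in D(P) and APu_n -> y, then for
   v in D(P)
     <Pv, Ax> = lim <v, PAu_n> = lim <v, APu_n + Bu_n> = <v, y + Bx>,
   so (Ax, y + Bx) lies in the graph of P^* = P; thus Ax, hence x, is in D(P)
   and APx = PAx - Bx = y.  Self-adjointness of APA: if <APAx, y> = <x, z> for
   all x in D(PA) = D(P), skewness of B turns this into
   <Px, A^2 y> = <x, z + BAy>, so A^2 y, hence Ay, is in D(P) and
   z = PAAy - BAy = APAy.  Limits pass through the inner product by the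
   Cauchy-Schwarz inequality. *)

From HB Require Import structures.
From mathcomp Require Import all_boot all_order all_algebra.
From mathcomp Require Import complex.
From mathcomp Require Import reals.
From mathcomp Require Import ring lra.
Import Order.TTheory GRing.Theory Num.Theory.
Set Implicit Arguments. Unset Strict Implicit. Unset Printing Implicit Defensive.
Local Open Scope complex_scope.
Local Open Scope ring_scope.

Section InnerProductSpace.
Variables (R : realType) (H : lmodType R[i]) (inner : H -> H -> R[i]).
Hypothesis IP : inner_product_axioms inner.

Local Notation nrm := (hnorm inner).
Local Notation normc := (@Normc.normc R).

Lemma normc_ge0 (c : R[i]) : 0 <= normc c.
Proof. by case: c => p q; exact: sqrtr_ge0. Qed.

Lemma innerDl x y z : inner (x + y) z = inner x z + inner y z.
Proof. by case: IP. Qed.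

Lemma innerZl a x y : inner (a *: x) y = a * inner x y.
Proof. by case: IP. Qed.

Lemma innerC x y : inner y x = (inner x y)^*.
Proof. by case: IP => _ _ + _ _; apply. Qed.

Lemma innerNl x y : inner (- x) y = - inner x y.
Proof. by rewrite -scaleN1r innerZl mulN1r. Qed.

Lemma innerBl x y z : inner (x - y) z = inner x z - inner y z.
Proof. by rewrite innerDl innerNl. Qed.

Lemma innerDr x y z : inner x (y + z) = inner x y + inner x z.
Proof. by rewrite !(innerC _ x) innerDl rmorphD. Qed.

Lemma innerZr a x y : inner x (a *: y) = a^* * inner x y.
Proof. by rewrite !(innerC _ x) innerZl rmorphM. Qed.

Lemma innerNr x y : inner x (- y) = - inner x y.
Proof. by rewrite -scaleN1r innerZr rmorphN1 mulN1r. Qed.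

Lemma innerBr x y z : inner x (y - z) = inner x y - inner x z.
Proof. by rewrite innerDr innerNr. Qed.

Lemma hnorm_ge0 x : 0 <= nrm x.
Proof. exact: sqrtr_ge0. Qed.

Lemma inner_self x : inner x x = (nrm x ^+ 2)%:C.
Proof.
case: IP => _ _ _ inner_ge0 _; have [Re_ge0 Im0] := inner_ge0 x.
rewrite /hnorm sqr_sqrtr //.
by move: (inner x x) Re_ge0 Im0 => [p q] /= _ ->.
Qed.

Lemma hnorm_sqr x : nrm x ^+ 2 = complex.Re (inner x x).
Proof. by rewrite inner_self. Qed.

Lemma hnorm_eq0 x : nrm x = 0 -> x = 0.
Proof.
by case: IP => _ _ _ _ inner_eq0 nx0; apply: inner_eq0; rewrite inner_self nx0 expr0n.
Qed.

Lemma hnormN x : nrm (- x) = nrm x.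
Proof. by rewrite /hnorm innerNl innerNr opprK. Qed.

Lemma hnormB x y : nrm (x - y) = nrm (y - x).
Proof. by rewrite -opprB hnormN. Qed.

Lemma cauchy_schwarz x y : normc (inner x y) <= nrm x * nrm y.
Proof.
have [->|y0] := eqVneq y 0.
  by rewrite -(scale0r 0) innerZr rmorph0 mul0r Normc.normc0 mulr_ge0 ?hnorm_ge0.
set a := inner x y; set b := nrm y ^+ 2.
have b_gt0 : 0 < b.
  by rewrite exprn_gt0 // lt_def hnorm_ge0 andbT; apply: contra_neq y0 => /hnorm_eq0.
have bC0 : b%:C != 0 by rewrite eq_complex /= gt_eqF.
have aJ : a * a^* = (normc a ^+ 2)%:C by rewrite -normCK rmorphXn.
set t := a / b%:C.
have tJ : t^* = a^* / b%:C.
  by rewrite rmorphM fmorphV; congr (_ * _^-1); exact: conjc_real.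
have : 0 <= complex.Re (inner (x - t *: y) (x - t *: y)) by rewrite -hnorm_sqr sqr_ge0.
rewrite innerBl !innerBr !innerZr !innerZl (innerC x y) -/a !inner_self.
have -> : (nrm x ^+ 2)%:C - t^* * a - (t * a^* - t^* * (t * b%:C)) =
          (nrm x ^+ 2)%:C - (normc a ^+ 2)%:C / b%:C.
  by rewrite tJ -aJ /t; field.
rewrite -fmorph_div -rmorphB /= subr_ge0 ler_pdivrMr // /b -exprMn => le_sq.
by rewrite -(ler_pXn2r (_ : 0 < 2)%N) ?nnegrE ?mulr_ge0 ?hnorm_ge0 ?normc_ge0.
Qed.

Lemma Re_conj (c : R[i]) : complex.Re c^* = complex.Re c.
Proof. by case: c. Qed.

Lemma Re_le_normc (c : R[i]) : complex.Re c <= normc c.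
Proof.
case: c => p q /=; apply: le_trans (ler_norm p) _.
by rewrite -sqrtr_sqr ler_sqrt ?addr_ge0 ?sqr_ge0 // lerDl sqr_ge0.
Qed.

Lemma hnormD x y : nrm (x + y) <= nrm x + nrm y.
Proof.
rewrite -(ler_pXn2r (_ : 0 < 2)%N) ?nnegrE ?addr_ge0 ?hnorm_ge0 //.
rewrite hnorm_sqr innerDl !innerDr (innerC x y) !raddfD /= -!hnorm_sqr Re_conj.
have := le_trans (Re_le_normc (inner x y)) (cauchy_schwarz x y).
rewrite sqrrD; lra.
Qed.

Lemma linear_opB (A : H -> H) x y : linear_for *:%R A -> A (x - y) = A x - A y.
Proof. by move=> A_lin; rewrite addrC -scaleN1r A_lin scaleN1r addrC. Qed.

Lemma bounded_opP (A : H -> H) : bounded_op inner A ->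
  exists2 K, 0 < K & forall x, nrm (A x) <= K * nrm x.
Proof.
move=> [_ [M A_le]]; exists (`|M| + 1); first by rewrite ltr_wpDl.
move=> x; apply: le_trans (A_le x) _.
by rewrite ler_wpM2r ?hnorm_ge0 // (le_trans (ler_norm M)) ?lerDl.
Qed.

Lemma bounded_op_continuous (A : H -> H) : bounded_op inner A ->
  forall d, 0 < d -> exists2 e, 0 < e &
    forall x y, nrm (y - x) < e -> nrm (A y - A x) < d.
Proof.
move=> A_bnd d d_gt0; have [K K_gt0 A_le] := bounded_opP A_bnd.
exists (d / K) => [|x y yx_lt]; first exact: divr_gt0.
rewrite -linear_opB; last exact: A_bnd.1.
by apply: le_lt_trans (A_le _) _; rewrite mulrC -ltr_pdivlMr.
Qed.

Lemma hconverges_bounded_op (A : H -> H) u x : bounded_op inner A ->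
  hconverges inner u x -> hconverges inner (fun n => A (u n)) (A x).
Proof.
move=> A_bnd ux d d_gt0; have [e e_gt0 A_near] := bounded_op_continuous A_bnd d_gt0.
by have [N uN] := ux e e_gt0; exists N => n Nn; apply/A_near/uN.
Qed.

Lemma hconvergesD u v x y : hconverges inner u x -> hconverges inner v y ->
  hconverges inner (fun n => u n + v n) (x + y).
Proof.
move=> ux vy d d_gt0; have d2_gt0 : 0 < d / 2 by rewrite divr_gt0.
have [N1 uN] := ux _ d2_gt0; have [N2 vN] := vy _ d2_gt0.
exists (N1 + N2)%N => n Nn; rewrite opprD addrACA.
apply: le_lt_trans (hnormD _ _) _.
have := uN n (leq_trans (leq_addr _ _) Nn); have := vN n (leq_trans (leq_addl _ _) Nn).
lra.
Qed.

Lemma inner_eq_of_approx w w' x y :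
  (forall d, 0 < d -> exists u v,
     [/\ nrm (u - x) < d, nrm (v - y) < d & inner w u = inner w' v]) ->
  inner w x = inner w' y.
Proof.
move=> approx; apply/eqP; rewrite -subr_eq0; apply/eqP/Normc.eq0_normc.
apply/le_anti; rewrite normc_ge0 andbT; apply/ler_addgt0Pr => e e_gt0.
set K := nrm w + nrm w' + 1.
have K_gt0 : 0 < K by rewrite /K ltr_wpDl ?addr_ge0 ?hnorm_ge0.
have [u [v [ux vy uv]]] := approx (e / K) (divr_gt0 e_gt0 K_gt0).
have -> : inner w x - inner w' y = inner w' (v - y) - inner w (u - x).
  by rewrite !innerBr uv; ring.
apply: le_trans (le_normcD _ _) _; rewrite normcN add0r.
have := cauchy_schwarz w' (v - y); have := cauchy_schwarz w (u - x).
have Ke : K * (e / K) = e by rewrite mulrC -mulrA mulVf ?mulr1 ?gt_eqF.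
have := hnorm_ge0 w; have := hnorm_ge0 w'; have := hnorm_ge0 (u - x).
have := hnorm_ge0 (v - y); rewrite /K in Ke *; nra.
Qed.

Lemma inner_eq_of_hconverges w w' u v x y :
  hconverges inner u x -> hconverges inner v y ->
  (forall n, inner w (u n) = inner w' (v n)) -> inner w x = inner w' y.
Proof.
move=> ux vy uv; apply: inner_eq_of_approx => d d_gt0.
have [N1 uN] := ux d d_gt0; have [N2 vN] := vy d d_gt0.
exists (u (N1 + N2)%N), (v (N1 + N2)%N).
by split; [apply: uN; rewrite leq_addr | apply: vN; rewrite leq_addl | ].
Qed.

Lemma dense_sub (D D' : H -> Prop) :
  dense inner D -> (forall x, D x -> D' x) -> dense inner D'.
Proof.
by move=> D_dense DD' x e e_gt0; have [y [/DD' ? ?]] := D_dense x e e_gt0; exists y.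
Qed.

Lemma self_adjoint_sym (D : H -> Prop) (T : H -> H) x y :
  self_adjoint inner D T -> D x -> D y -> inner (T x) y = inner x (T y).
Proof. by move=> [_ T_sa] Dx Dy; exact: (T_sa y (T y)).2. Qed.

Section Commutator.
Variables (A P B : H -> H) (DP : H -> Prop).
Hypotheses (A_bnd : bounded_op inner A) (A_sym : symmetric_op inner A).
Hypothesis P_sa : self_adjoint inner DP P.
Hypothesis dom_PA : forall x, dom_comp_right DP A x <-> DP x.
Hypothesis B_bnd : bounded_op inner B.
Hypothesis PA_AP : forall f, DP f -> P (A f) - A (P f) = B f.

Lemma dom_A x : DP x -> DP (A x).
Proof. exact: (dom_PA x).2. Qed.

Lemma P_sym x y : DP x -> DP y -> inner (P x) y = inner x (P y).
Proof. exact: self_adjoint_sym P_sa. Qed.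

Lemma AP_PA f : DP f -> A (P f) = P (A f) - B f.
Proof. by move=> Df; rewrite -PA_AP // opprB addrC subrK. Qed.

Lemma commutator_skew_dom x w : DP x -> DP w -> inner (B x) w = - inner x (B w).
Proof.
move=> Dx Dw; rewrite -!PA_AP // innerBl innerBr opprB.
by rewrite (P_sym (dom_A Dx) Dw) !A_sym (P_sym Dx (dom_A Dw)).
Qed.

Lemma commutator_skew x w : DP x -> inner (B x) w = - inner x (B w).
Proof.
move=> Dx; rewrite -innerNl; apply: inner_eq_of_approx => d d_gt0.
have [e e_gt0 B_near] := bounded_op_continuous B_bnd d_gt0.
have de_gt0 : 0 < Order.min d e by rewrite lt_min d_gt0.
have [y [Dy wy]] := P_sa.1 w _ de_gt0.
rewrite lt_min hnormB in wy; case/andP: wy => yw_d yw_e.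
exists y, (B y); split=> //; first exact: B_near.
by rewrite commutator_skew_dom // innerNl.
Qed.

Lemma AP_closed : closed_op inner (dom_comp_left DP) (fun x => A (P x)).
Proof.
move=> u x y Du ux APu_y.
have adj : adjoint_graph inner DP P (A x) (y + B x).
  move=> v Dv; apply: (inner_eq_of_hconverges (hconverges_bounded_op A_bnd ux)).
    exact: hconvergesD APu_y (hconverges_bounded_op B_bnd ux).
  move=> n; rewrite (P_sym Dv (dom_A (Du n))) -PA_AP; last exact: Du.
  by rewrite addrC subrK.
have [DAx PAx] := (P_sa.2 _ _).1 adj.
have Dx : DP x by exact: (dom_PA x).1.
by split=> //; rewrite AP_PA // -PAx addrK.
Qed.

Lemma APA_self_adjoint :
  self_adjoint inner (dom_comp_right DP A) (fun x => A (P (A x))).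
Proof.
split; first exact: dense_sub P_sa.1 dom_A.
move=> y z; split=> [APA_adj | [DAy ->] x DAx]; last first.
  by rewrite A_sym P_sym // -A_sym.
have adj : adjoint_graph inner DP P (A (A y)) (z + B (A y)).
  move=> x Dx; rewrite -A_sym AP_PA // innerBl -A_sym (APA_adj x (dom_A Dx)).
  by rewrite commutator_skew // opprK innerDr.
have [DAAy PAAy] := (P_sa.2 _ _).1 adj.
have DAy : DP (A y) by exact: (dom_PA _).1.
by split=> //; rewrite AP_PA // -PAAy addrK.
Qed.

End Commutator.

End InnerProductSpace.

Theorem mainTheorem2 (R : realType) (H : lmodType R[i]) (inner : H -> H -> R[i])
  (A : H -> H) (DP : H -> Prop) (P : H -> H) (B : H -> H) :
  is_hilbert_space inner ->
  bounded_op inner A -> symmetric_op inner A ->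
  self_adjoint inner DP P ->
  (forall x, dom_comp_right DP A x <-> DP x) ->
  bounded_op inner B -> (forall f, DP f -> DP (B f)) ->
  (forall f, DP f -> P (A f) - A (P f) = B f) ->
  closed_op inner (dom_comp_left DP) (fun x => A (P x)) /\
  self_adjoint inner (dom_comp_right DP A) (fun x => A (P (A x))).
Proof.
move=> [IP _] A_bnd A_sym P_sa dom_PA B_bnd _ PA_AP.
split; first exact (AP_closed IP A_bnd P_sa dom_PA B_bnd PA_AP).
exact (APA_self_adjoint IP A_sym P_sa dom_PA B_bnd PA_AP).
Qed.
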